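(* Let $d\ge1$. There is $\kappa>0$, depending only on $d$, such that the following holds. Let $N\ge1$ be an integer and $p\in(1-\kappa,1]$, and let $\tilde{\mathbb{P}}$ assign to each vertex $i$ of the graph $\Xi$ (defined in the context) a value $\eta(i)\in\{0,1\}$, independently, with $\tilde{\mathbb{P}}(\eta(i)=1)=p$. Then there are constants $\varphi>0$ and $c_1,c_2>0$, depending only on $p$ and $d$, such that \[ \tilde{\mathbb{P}}\bigl(T(x)<\varphi\|x\|\bigr)\le c_1e^{-c_2\|x\|}\qquad\text{for all }x\in\mathcal{A}. \]
   Context: $\mathcal{A}=\{(x_1,\dots,x_d)\in\mathbb{Z}^d:x_1+\dots+x_d\equiv0\pmod2\}$ is the even sublattice. $\Xi=\mathcal{A}\times\{0,\dots,N-1\}$ is a graph in which $(x,k)$ and $(y,\ell)$ are adjacent if either $x=y$ and $k=\ell\pm1$ (mod $N$), or $k=\ell$ and $x,y$ are next-nearest neighbours in $\mathbb{Z}^d$ (i.e. distinct points at graph distance 2 in $\mathbb{Z}^d$). For $x\in\mathcal{A}$, the passage time is $T(x)=\inf_\pi\sum_{i\in\pi}\eta(i)$, the infimum over all paths $\pi$ in $\Xi$ from $(0,0)$ to $(x,0)$. $\|x\|$ is the (Euclidean) norm. *)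

From HB Require Import structures.
From mathcomp Require Import all_boot all_order all_algebra.
From mathcomp Require Import all_classical all_reals all_analysis.
Set Implicit Arguments. Unset Strict Implicit. Unset Printing Implicit Defensive.
Import Order.TTheory GRing.Theory Num.Theory.
Local Open Scope classical_set_scope.
Local Open Scope ring_scope.

(* A point of Z^d and a layer index: the ambient type of vertices of Xi. *)
Definition vertex (d : nat) : Type := ({ffun 'I_d -> int} * nat)%type.

Definition inA (d : nat) (x : {ffun 'I_d -> int}) : bool :=
  (2 %| \sum_(i < d) x i)%Z.

Definition inXi (d N : nat) (v : vertex d) : bool :=
  inA v.1 && (v.2 < N)%N.

Definition l1dist (d : nat) (x y : {ffun 'I_d -> int}) : nat :=
  (\sum_(i < d) `|x i - y i|%N)%N.

Definition adjXi (d N : nat) (u v : vertex d) : bool :=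
  ((u.1 == v.1) && ((u.2 == (v.2 + 1) %% N)%N || (v.2 == (u.2 + 1) %% N)%N))
  || ((u.2 == v.2) && (l1dist u.1 v.1 == 2)%N).

Definition origin (d : nat) : vertex d := ([ffun=> 0], 0%N).

Definition is_xpath (d N : nat) (x : {ffun 'I_d -> int}) (pi : seq (vertex d))
  : bool :=
  match pi with
  | [::] => false
  | v0 :: s => [&& v0 == origin d, path (adjXi N) v0 s,
                   last v0 s == (x, 0%N) & all (inXi N) pi]
  end.

Definition path_weight (d : nat) (Omega : Type) (eta : vertex d -> Omega -> bool)
  (pi : seq (vertex d)) (w : Omega) : nat :=
  (\sum_(v <- pi) (eta v w : nat))%N.

Definition passage_time (R : realType) (d N : nat) (Omega : Type)
  (eta : vertex d -> Omega -> bool) (x : {ffun 'I_d -> int}) (w : Omega)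
  : \bar R :=
  ereal_inf [set ((path_weight eta pi w)%:R)%:E | pi in [set pi | is_xpath N x pi]].

Definition normx (R : realType) (d : nat) (x : {ffun 'I_d -> int}) : R :=
  Num.sqrt (\sum_(i < d) ((x i)%:~R) ^+ 2).

(* (eta(i))_{i in Xi} are independent {0,1}-valued with P(eta(i) = 1) = p:
   each eta(i) is measurable, and for every finite family of distinct vertices
   the joint law is the product of Bernoulli(p) laws. *)
Definition bernoulli_field (R : realType) (d N : nat) (dm : measure_display)
  (Omega : measurableType dm) (P : probability Omega R)
  (eta : vertex d -> Omega -> bool) (p : R) : Prop :=
  (forall v, inXi N v -> measurable [set w | eta v w]) /\
  (forall (S : seq (vertex d)) (b : vertex d -> bool),
      uniq S -> all (inXi N) S ->
      P (\bigcap_(v in [set` S]) [set w | eta v w = b v])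
      = (\prod_(v <- S) (if b v then p else 1 - p))%:E).

From HB Require Import structures.
From mathcomp Require Import all_boot all_order all_algebra.
From mathcomp Require Import all_classical all_reals all_analysis.
From mathcomp Require Import zify ring lra.
Set Implicit Arguments. Unset Strict Implicit.
Import Order.TTheory GRing.Theory Num.Theory.
Local Open Scope classical_set_scope.
Local Open Scope ring_scope.

(* A Peierls argument.  If T(x) < ||x||/8, some path from the origin to x visits
   few sites with eta = 1.  Each edge of Xi moves by at most 2 in l^1, so after
   loop erasure the path still has n = |x|_1 / 2 steps, and its first n steps
   form a self-avoiding walk whose n+1 distinct sites are mostly zeros.  Such
   a walk is coded by n letters of a finite alphabet of size D, and by
   independence a fixed walk has at least half of its sites at zero with
   probability at most 2^(n+1) (1-p)^(n/2).  When 1 - p <= (4D)^-2 the union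
   bound gives 2 * 2^-n, which decays exponentially in ||x|| <= |x|_1. *)

(* [inl b] moves one layer up ([b = true]) or down, cyclically; [inr f] adds
   the displacement [f i - 2] in [{-2,...,2}^d], which contains every
   next-nearest neighbour move. *)
Definition step (d : nat) : finType := (bool + {ffun 'I_d -> 'I_5})%type.

Definition step_move (d N : nat) (st : step d) (u : vertex d) : vertex d :=
  match st with
  | inl b => (u.1, if b then ((u.2 + 1) %% N)%N else ((u.2 + N.-1) %% N)%N)
  | inr f => ([ffun i => u.1 i + ((f i : nat)%:Z - 2)], u.2)
  end.
Arguments step_move {d} N st u.

Definition walk (d N : nat) (u : vertex d) (s : seq (step d)) : seq (vertex d) :=
  scanl (fun v st => step_move N st v) u s.
Arguments walk {d} N u s.

Lemma size_walk (d N : nat) (u : vertex d) (s : seq (step d)) :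
  size (walk N u s) = size s.
Proof. exact: size_scanl. Qed.

Lemma leq_l1dist_coord (d : nat) (x y : {ffun 'I_d -> int}) (i : 'I_d) :
  (`|x i - y i|%N <= l1dist x y)%N.
Proof. by rewrite /l1dist (bigD1 i) //= leq_addr. Qed.

Lemma l1dist_triangle (d : nat) (x y z : {ffun 'I_d -> int}) :
  (l1dist x z <= l1dist x y + l1dist y z)%N.
Proof. by rewrite /l1dist -big_split /=; apply: leq_sum => i _; lia. Qed.

Lemma l1dist_xx (d : nat) (x : {ffun 'I_d -> int}) : l1dist x x = 0%N.
Proof. by rewrite /l1dist big1 // => i _; rewrite subrr. Qed.

Lemma l1dist_adjXi (d N : nat) (u v : vertex d) :
  adjXi N u v -> (l1dist u.1 v.1 <= 2)%N.
Proof. by case/orP => /andP[/eqP eq_uv /eqP h]; rewrite ?eq_uv ?l1dist_xx ?h. Qed.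

Lemma l1dist_path_last (d N : nat) (u : vertex d) (q : seq (vertex d)) :
  path (adjXi N) u q -> (l1dist u.1 (last u q).1 <= 2 * size q)%N.
Proof.
elim: q u => [|v q IH] u /=; first by rewrite l1dist_xx.
case/andP=> /l1dist_adjXi uv /IH vq.
by have := l1dist_triangle u.1 v.1 (last v q).1; lia.
Qed.

Lemma adjXi_step_move (d N : nat) (u v : vertex d) : (0 < N)%N ->
  inXi N u -> inXi N v -> adjXi N u v -> exists st : step d, v = step_move N st u.
Proof.
case: u => [y k]; case: v => [z l] N0 /andP[_ /= kN] /andP[_ /= lN].
case/orP => /= /andP[/eqP <-].
  case/orP => [/eqP kl|/eqP ->]; last by exists (inl true).
  exists (inl false); congr (_, _) => /=.
  rewrite kl modnDml -addnA addnC; case: N N0 lN {kN kl} => //= n _ ln.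
  by rewrite add1n modnDl modn_small.
move/eqP=> yz.
exists (inr [ffun i => inord (absz (z i - y i + 2))]); congr (_, _).
apply/ffunP => i; rewrite !ffunE.
have := leq_l1dist_coord y z i; rewrite yz => zyi.
rewrite inordK; last by lia.
have -> : (absz (z i - y i + 2))%:Z = z i - y i + 2 by lia.
by rewrite addrK addrC subrK.
Qed.

Lemma path_adjXi_walk (d N : nat) (u : vertex d) (q : seq (vertex d)) :
  (0 < N)%N -> path (adjXi N) u q -> all (inXi N) (u :: q) ->
  exists s : seq (step d), walk N u s = q.
Proof.
move=> N0; elim: q u => [|v q IH] u /=; first by exists [::].
case/andP=> uv vq /and3P[uXi vXi qXi].
have [st v_st] := adjXi_step_move N0 uXi vXi uv.
have [s ws] := IH _ vq (introT andP (conj vXi qXi)).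
by exists (st :: s); rewrite /walk /= -v_st -/(walk N _ s) ws.
Qed.

Lemma xpath_uniq_prefix (d N : nat) (x : {ffun 'I_d -> int})
    (pi : seq (vertex d)) (k : nat) :
  is_xpath N x pi -> (2 * k <= l1dist [ffun=> 0%R] x)%N ->
  exists s : seq (vertex d), [/\ size s = k, path (adjXi N) (origin d) s,
    uniq (origin d :: s), all (inXi N) (origin d :: s)
    & {subset origin d :: s <= pi}].
Proof.
case: pi => [|v0 s0] // /and4P[/eqP-> xpath /eqP + piXi] kx.
case: (shortenP xpath) => q pq uq sub_q q_last.
have kq : (k <= size q)%N.
  rewrite -(@leq_pmul2l 2) //; apply: leq_trans kx _.
  by have := l1dist_path_last pq; rewrite q_last.
have sub_take : {subset origin d :: take k q <= origin d :: s0}.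
  move=> v; rewrite !inE => /orP[-> //|/mem_take /sub_q ->].
  by rewrite orbT.
exists (take k q); split.
- exact: size_takel.
- by move: pq; rewrite -[q in path _ _ q](cat_take_drop k) cat_path => /andP[].
- exact: (take_uniq k.+1 uq).
- by apply/allP => v /sub_take /(allP piXi).
- exact: sub_take.
Qed.

Lemma xpath_uniq_walk (d N : nat) (x : {ffun 'I_d -> int})
    (pi : seq (vertex d)) (k : nat) :
  (0 < N)%N -> is_xpath N x pi -> (2 * k <= l1dist [ffun=> 0%R] x)%N ->
  exists t : k.-tuple (step d),
    [/\ uniq (origin d :: walk N (origin d) t),
        all (inXi N) (origin d :: walk N (origin d) t)
      & {subset origin d :: walk N (origin d) t <= pi}].
Proof.
move=> N0 xpath kx.
have [s [size_s ps us sXi sub_s]] := xpath_uniq_prefix xpath kx.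
have [st ws] := path_adjXi_walk N0 ps sXi.
have size_st : size st == k by rewrite -size_s -ws size_walk.
by exists (Tuple size_st); rewrite /= ws.
Qed.

Lemma count_le_uniq_subset (T : eqType) (a : pred T) (s t : seq T) :
  uniq s -> {subset s <= t} -> (count a s <= count a t)%N.
Proof.
move=> us st; rewrite -!size_filter; apply: uniq_leq_size.
  exact: filter_uniq.
by move=> z; rewrite !mem_filter => /andP[-> /st].
Qed.

Lemma path_weightE (d : nat) (Omega : Type) (eta : vertex d -> Omega -> bool)
    (pi : seq (vertex d)) (w : Omega) :
  path_weight eta pi w = count (eta^~ w) pi.
Proof.
rewrite /path_weight; elim: pi => [|v pi IH]; first by rewrite big_nil.
by rewrite big_cons IH.
Qed.

Lemma sum_sqr_le_sqr_sum (R : realDomainType) (I : Type) (r : seq I)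
    (b : I -> R) :
  (forall i, 0 <= b i) -> \sum_(i <- r) b i ^+ 2 <= (\sum_(i <- r) b i) ^+ 2.
Proof.
move=> b0; elim: r => [|i r IH]; first by rewrite !big_nil expr0n.
have s0 : 0 <= \sum_(j <- r) b j by apply: sumr_ge0.
have := b0 i; rewrite !big_cons; nra.
Qed.

Lemma normx_le_l1dist (R : realType) (d : nat) (x : {ffun 'I_d -> int}) :
  normx R x <= (l1dist [ffun=> 0] x)%:R.
Proof.
rewrite /normx /l1dist natr_sum.
have -> : \sum_(i < d) ((x i)%:~R : R) ^+ 2 = \sum_(i < d) `|(x i)%:~R : R| ^+ 2.
  by apply: eq_bigr => i _; rewrite real_normK ?num_real.
under [X in _ <= X]eq_bigr do rewrite ffunE sub0r abszN natr_absz intr_norm.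
rewrite -[X in _ <= X]ger0_norm; last exact: sumr_ge0.
rewrite -sqrtr_sqr ler_sqrt ?exprn_ge0 //; last exact: sumr_ge0.
exact: (sum_sqr_le_sqr_sum _ (fun i => normr_ge0 _)).
Qed.

Lemma halfX_le_expR (R : realType) (n : nat) (y : R) : y <= (2 * n + 1)%:R ->
  2^-1 ^+ n <= 2 * expR (- (4^-1 * y)).
Proof.
move=> yn.
have : expR (- (4^-1 * (2 * n + 1)%:R)) <= expR (- (4^-1 * y)).
  by rewrite ler_expR; lra.
have -> : - (4^-1 * (2 * n + 1)%:R) = n%:R * (- 2^-1) + (- 4^-1) :> R.
  by rewrite natrD natrM; lra.
rewrite expRD expRM_natl => expR_le.
have half_le : 2^-1 <= expR (- 2^-1 : R) by have := expR_ge1Dx (- 2^-1 : R); lra.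
have quarter_le : 3/4 <= expR (- 4^-1 : R).
  by have := expR_ge1Dx (- 4^-1 : R); lra.
have halfX_le : 2^-1 ^+ n <= expR (- 2^-1 : R) ^+ n.
  by apply: lerXn2r; rewrite // ?nnegrE // expR_ge0.
have : 0 <= 2^-1 ^+ n :> R by rewrite exprn_ge0 // invr_ge0.
nra.
Qed.

(* [D ^+ n] walks, [2 ^+ n.+1] patterns of eta on their sites, each of
   probability at most [q ^+ m]. *)
Lemma peierls_bound (R : realFieldType) (D q : R) (n m : nat) :
  1 <= D -> 0 <= q -> q <= (4 * D) ^- 2 -> (n <= 2 * m)%N ->
  D ^+ n * (2 ^+ n.+1 * q ^+ m) <= 2 * 2^-1 ^+ n.
Proof.
move=> D1 q0 qD nm.
set r := (4 * D)^-1.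
have r0 : 0 <= r by rewrite invr_ge0; lra.
have r1 : r <= 1 by rewrite invr_le1 ?unitfE; lra.
have qm : q ^+ m <= r ^+ n.
  apply: le_trans (_ : (r ^+ 2) ^+ m <= _).
    by apply: lerXn2r; rewrite ?nnegrE ?exprn_ge0 // exprVn.
  by rewrite -exprM; apply: ler_wiXn2l.
have Dr : D * (2 * r) = 2^-1 by rewrite /r; field; lra.
have -> : 2 * 2^-1 ^+ n = D ^+ n * (2 ^+ n.+1 * r ^+ n).
  by rewrite -Dr !exprMn exprS; ring.
by rewrite !ler_wpM2l ?exprn_ge0 //; lra.
Qed.

Lemma le_measure_sum_cover (dm : measure_display) (T : measurableType dm)
    (R : realType) (mu : {measure set T -> \bar R}) (I : finType)
    (A : set T) (F : I -> set T) :
  measurable A -> (forall i, measurable (F i)) -> A `<=` \bigcup_i F i ->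
  (mu A <= \sum_(i : I) mu (F i))%E.
Proof.
move=> mA mF AF.
have -> : (\sum_(i : I) mu (F i) = \sum_(i \in [set: I]) mu (F i))%E.
  have -> : [set: I] = [set` enum I].
    by apply/seteqP; split => i //=; rewrite mem_enum.
  by rewrite -fsbig_seq ?enum_uniq // big_enum.
by apply: content_sub_fsum => //; exact: finite_finset.
Qed.

Lemma map_nth_index_uniq (T : eqType) (x0 : T) (S : seq T) (b : seq bool) :
  uniq S -> size b = size S -> map (fun v => nth false b (index v S)) S = b.
Proof.
move=> uS sb; apply: (@eq_from_nth _ false); first by rewrite size_map sb.
by move=> i; rewrite size_map => iS; rewrite (nth_map x0) // index_uniq.
Qed.

Lemma prod_bernoulli_le (R : realDomainType) (p : R) (b : seq bool) :
  0 <= p -> p <= 1 ->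
  \prod_(j <- b) (if j then p else 1 - p) <= (1 - p) ^+ count negb b.
Proof.
move=> p0 p1; elim: b => [|j b IH]; first by rewrite big_nil.
have prod_ge0 : 0 <= \prod_(i <- b) (if i then p else 1 - p).
  by apply: prodr_ge0 => -[] _; lra.
rewrite big_cons; case: j => /=.
  by rewrite -[X in _ <= X]mul1r; apply: ler_pM.
by rewrite add1n exprS; apply: ler_pM => //; lra.
Qed.

Section BernoulliField.
Variables (R : realType) (d N : nat) (dm : measure_display).
Variables (Omega : measurableType dm) (P : probability Omega R).
Variables (eta : vertex d -> Omega -> bool) (p : R).
Hypothesis eta_bernoulli : bernoulli_field N P eta p.

Lemma measurable_eta_seq (S : seq (vertex d)) (Q : pred (seq bool)) :
  all (inXi N) S -> measurable [set w | Q (map (eta^~ w) S)].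
Proof.
elim: S Q => [|v S IH] Q /=.
  move=> _; case: (boolP (Q [::])) => Qnil.
    by rewrite (_ : [set w | _] = setT) //; apply/seteqP; split.
  by rewrite (_ : [set w | _] = set0) //; apply/seteqP; split => // w /= /negP.
case/andP => vXi SXi.
have -> : [set w | Q (eta v w :: map (eta^~ w) S)] =
    ([set w | eta v w] `&` [set w | Q (true :: map (eta^~ w) S)]) `|`
    (~` [set w | eta v w] `&` [set w | Q (false :: map (eta^~ w) S)]).
  apply/seteqP; split => w /=; first by case: (eta v w) => ?; [left|right].
  by case=> -[]; case: (eta v w).
apply: measurableU; apply: measurableI.
- exact: eta_bernoulli.1.
- exact: (IH (fun l => Q (true :: l))).
- by apply: measurableC; exact: eta_bernoulli.1.
- exact: (IH (fun l => Q (false :: l))).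
Qed.

Lemma prob_eta_seq (S : seq (vertex d)) (b : seq bool) :
  uniq S -> all (inXi N) S -> size b = size S ->
  P [set w | map (eta^~ w) S == b] = (\prod_(j <- b) (if j then p else 1 - p))%:E.
Proof.
move=> uS SXi sb.
pose bf v := nth false b (index v S).
have bfS : map bf S = b by exact: (map_nth_index_uniq (origin d)).
have -> : [set w | map (eta^~ w) S == b] =
    \bigcap_(v in [set` S]) [set w | eta v w = bf v].
  rewrite -bfS; apply/seteqP; split => w /=.
    by move=> /eqP/eq_in_map eta_bf v; apply: eta_bf.
  by move=> eta_bf; apply/eqP/eq_in_map => v; apply: eta_bf.
by rewrite eta_bernoulli.2 // -[in RHS]bfS big_map.
Qed.

Definition zeros_event (m : nat) (S : seq (vertex d)) : set Omega :=
  if uniq S && all (inXi N) S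
  then [set w | (m <= count (fun v => ~~ eta v w) S)%N] else set0.

Lemma measurable_count_zeros (m : nat) (S : seq (vertex d)) :
  all (inXi N) S -> measurable [set w | (m <= count (fun v => ~~ eta v w) S)%N].
Proof.
move=> /(measurable_eta_seq (fun l => (m <= count negb l)%N)).
by congr measurable; apply/seteqP; split => w; rewrite /= count_map.
Qed.

Lemma measurable_zeros_event (m : nat) (S : seq (vertex d)) :
  measurable (zeros_event m S).
Proof.
rewrite /zeros_event; case: ifP => // /andP[_ SXi].
exact: measurable_count_zeros.
Qed.

Lemma zeros_event_le (m : nat) (S : seq (vertex d)) : 0 <= p -> p <= 1 ->
  (P (zeros_event m S) <= ((2 ^ size S)%:R * (1 - p) ^+ m)%:E)%E.
Proof.
move=> p0 p1.
have bound_ge0 : 0 <= (2 ^ size S)%:R * (1 - p) ^+ m.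
  by rewrite mulr_ge0 ?exprn_ge0 //; lra.
rewrite /zeros_event; case: ifP => [/andP[uS SXi]|_]; last first.
  by rewrite measure0 lee_fin.
pose C (b : (size S).-tuple bool) : set Omega :=
  if (m <= count negb b)%N then [set w | map (eta^~ w) S == b] else set0.
have mC b : measurable (C b).
  rewrite /C; case: ifP => _ //.
  exact: (measurable_eta_seq (fun l => l == b) SXi).
have PC b : (P (C b) <= ((1 - p) ^+ m)%:E)%E.
  rewrite /C; case: ifP => mb; last by rewrite measure0 lee_fin exprn_ge0 //; lra.
  rewrite prob_eta_seq ?size_tuple // lee_fin.
  apply: le_trans (prod_bernoulli_le b p0 p1) _.
  by apply: ler_wiXn2l => //; lra.
apply: le_trans (le_measure_sum_cover P (measurable_count_zeros m SXi) mC _) _.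
  move=> w /= mw; exists (map_tuple (eta^~ w) (in_tuple S)) => //.
  by rewrite /C /= count_map mw /=.
apply: le_trans (_ : _ <= \sum_(b : (size S).-tuple bool) ((1 - p) ^+ m)%:E)%E _.
  by apply: lee_sum => b _; exact: PC.
by rewrite sumEFin lee_fin sumr_const card_tuple card_bool mulr_natl.
Qed.

Lemma passage_time_ltP (x : {ffun 'I_d -> int}) (t : R) (w : Omega) :
  (passage_time R N eta x w < t%:E)%E <->
  exists2 pi, is_xpath N x pi & (path_weight eta pi w)%:R < t.
Proof.
split; first by move/ereal_inf_ltP => [_ [pi xpi <-]]; rewrite lte_fin; exists pi.
move=> [pi xpi pi_lt].
apply: le_lt_trans (_ : _ <= (path_weight eta pi w)%:R%:E)%E _.
  by apply: ereal_inf_lbound; exists pi.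
by rewrite lte_fin.
Qed.

Lemma measurable_passage_time_lt (x : {ffun 'I_d -> int}) (t : R) :
  measurable [set w | (passage_time R N eta x w < t%:E)%E].
Proof.
have -> : [set w | (passage_time R N eta x w < t%:E)%E] =
    \bigcup_pi [set w | is_xpath N x pi /\ (path_weight eta pi w)%:R < t].
  apply/seteqP; split => w /=; first by case/passage_time_ltP => pi; exists pi.
  by case=> pi _ [xpi pi_lt]; apply/passage_time_ltP; exists pi.
apply: countable_bigcupT_measurable => [|pi]; first exact: countableP.
case: (boolP (is_xpath N x pi)) => [xpi|/negbTE not_xpi]; last first.
  by rewrite (_ : [set w | _] = set0) //; apply/seteqP; split => w // [].
have piXi : all (inXi N) pi by case: pi xpi => // v s /and4P[].
have := measurable_eta_seq (fun l => (count id l)%:R < t) piXi.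
congr measurable; apply/seteqP; split => w /=; rewrite path_weightE count_map.
  by move=> pi_lt; split.
by case.
Qed.

Lemma passage_time_lt_zeros_event (x : {ffun 'I_d -> int}) (n : nat) (w : Omega) :
  (0 < N)%N -> (l1dist [ffun=> 0%R] x %/ 2)%N = n ->
  (passage_time R N eta x w < (8^-1 * normx R x)%:E)%E ->
  exists t : n.-tuple (step d),
    zeros_event (n - n %/ 2) (origin d :: walk N (origin d) t) w.
Proof.
move=> N0 xn /passage_time_ltP [pi xpi pi_lt].
have nx : (2 * n <= l1dist [ffun=> 0%R] x)%N by rewrite -xn mulnC leq_divM.
have [t [ut tXi sub_t]] := xpath_uniq_walk N0 xpi nx.
exists t; set q := origin d :: walk N (origin d) t in ut tXi sub_t *.
rewrite /zeros_event ut tXi.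
change (n - n %/ 2 <= count (fun v => ~~ eta v w) q)%N.
have size_q : size q = n.+1 by rewrite /= size_walk size_tuple.
have ones_le : (count (eta^~ w) q <= count (eta^~ w) pi)%N.
  exact: count_le_uniq_subset.
have ones_lt : (8 * count (eta^~ w) pi < 2 * n + 1)%N.
  rewrite -path_weightE -(ltr_nat R) natrM.
  have := normx_le_l1dist R x.
  have : (l1dist [ffun=> 0%R] x <= 2 * n + 1)%N by rewrite -xn; lia.
  rewrite -(ler_nat R); lra.
have : (count (eta^~ w) q + count (fun v => ~~ eta v w) q = size q)%N.
  exact: count_predC.
rewrite size_q; lia.
Qed.

End BernoulliField.

Unset Implicit Arguments. Set Strict Implicit.

Theorem lemma3p2 (R : realType) (d : nat) : (1 <= d)%N ->
  exists kappa : R, 0 < kappa /\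
  forall p : R, 1 - kappa < p -> p <= 1 ->
  exists phi c1 c2 : R, [/\ 0 < phi, 0 < c1 & 0 < c2] /\
  forall N : nat, (1 <= N)%N ->
  forall (dm : measure_display) (Omega : measurableType dm)
         (P : probability Omega R) (eta : vertex d -> Omega -> bool),
  bernoulli_field N P eta p ->
  forall x : {ffun 'I_d -> int}, inA x ->
  (P [set w | (passage_time R N eta x w < (phi * normx R x)%:E)%E]
    <= (c1 * expR (- (c2 * normx R x)))%:E)%E.
Proof.
move=> _; pose D : R := #|step d|%:R.
have D1 : 1 <= D by rewrite ler1n card_sum card_bool.
have kappa_gt0 : 0 < (4 * D) ^- 2 by rewrite invr_gt0 exprn_gt0 //; lra.
have kappa_le1 : (4 * D) ^- 2 <= 1.
  by rewrite invr_le1 ?unitfE ?expf_neq0 ?exprn_gt0 //; [nra | lra | lra].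
exists ((4 * D) ^- 2); split => // p p_gt p_le1.
have p_ge0 : 0 <= p by lra.
exists 8^-1, 4, 4^-1; split => // N N_gt0 dm Omega P eta eta_bernoulli x _.
set n := (l1dist [ffun=> 0%R] x %/ 2)%N.
have x_le : normx R x <= (2 * n + 1)%:R.
  apply: le_trans (normx_le_l1dist R x) _; rewrite ler_nat /n; lia.
apply: le_trans (_ : _ <= \sum_(t : n.-tuple (step d))
    P (zeros_event N eta (n - n %/ 2) (origin d :: walk N (origin d) t)))%E _.
  apply: le_measure_sum_cover => [|t|w].
  - exact: measurable_passage_time_lt eta_bernoulli _ _.
  - exact: measurable_zeros_event eta_bernoulli _ _.
  - by move/(passage_time_lt_zeros_event N_gt0 erefl) => [t ?]; exists t.
apply: le_trans (_ : _ <= \sum_(t : n.-tuple (step d))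
    ((2 ^ n.+1)%:R * (1 - p) ^+ (n - n %/ 2))%:E)%E _.
  apply: lee_sum => t _.
  apply: le_trans (zeros_event_le eta_bernoulli _ _ p_ge0 p_le1) _.
  by rewrite /= size_walk size_tuple.
rewrite sumEFin lee_fin sumr_const card_tuple -(mulr_natl _ (_ ^ n)) !natrX -/D.
apply: le_trans (peierls_bound D1 _ _ _) _; [lra | lra | lia |].
by have := halfX_le_expR x_le; lra.
Qed.
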